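(* There is an absolute constant $C$ such that for every finite set $U$ of size $N\ge 4$ and every real $\Delta\ge 0$ there exists a $(\Delta,L)$-UCS over $U$ with $L(P)\le C\,(H(P)+\Delta+\log_2\log_2 N)$ for every $P\in\mathcal P(U)$. That is, there is a deterministic pair $(E,D)$ with $D(Q,E(P,m))=m$ for all $\Delta$-close $P,Q$ and all $m\in U$, whose expected encoding length under $P$ is $O(H(P)+\Delta+\log\log N)$.
   Context: $\mathcal P(U)$ denotes the set of all probability distributions on the finite set $U$; $\{0,1\}^*$ is the set of finite binary strings and $|x|$ the length of $x$. For $P,Q\in\mathcal P(U)$ and $\Delta\ge0$, $P$ and $Q$ are $\Delta$-close if for all $m\in U$, $\log_2(P(m)/Q(m))\le\Delta$ and $\log_2(Q(m)/P(m))\le\Delta$; $\delta(P,Q)$ is the minimum $\Delta$ for which they are $\Delta$-close. $H(P)=\sum_{m}P(m)\log_2(1/P(m))$ is the binary entropy. A $(\Delta,L)$-UCS (uncertain compression scheme) over $U$, where $L:\mathcal P(U)\to\mathbb R^+$, is a pair of maps $E:\mathcal P(U)\times U\to\{0,1\}^*$ and $D:\mathcal P(U)\times\{0,1\}^*\to U$ such that (i) for every pair $P,Q\in\mathcal P(U)$ that are $\Delta$-close and every $m\in U$, $D(Q,E(P,m))=m$, and (ii) for every $P\in\mathcal P(U)$, $\mathbb E_{m\sim P}[|E(P,m)|]\le L(P)$. *)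

From Stdlib Require Import Reals List.
Open Scope R_scope.

(* The finite universe U of size N is {0, ..., N-1} (naturals m with m < N). *)

Fixpoint rsum (n : nat) (f : nat -> R) : R :=
  match n with
  | O => 0
  | S k => rsum k f + f k
  end.

Definition log2 (x : R) : R := ln x / ln 2.

(* P is a probability distribution on U = {0,...,N-1}
   (values outside U are irrelevant). *)
Definition is_dist (N : nat) (P : nat -> R) : Prop :=
  (forall m, (m < N)%nat -> 0 <= P m) /\ rsum N P = 1.

(* Delta-closeness: log2(P m / Q m) <= Delta and log2(Q m / P m) <= Delta for
   all m in U, written multiplicatively (convention log2(0/0) = 0, and
   log2(x/0) = +oo for x > 0). *)
Definition close (N : nat) (Delta : R) (P Q : nat -> R) : Prop :=
  forall m, (m < N)%nat ->
    P m <= Rpower 2 Delta * Q m /\ Q m <= Rpower 2 Delta * P m.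

Definition entropy (N : nat) (P : nat -> R) : R :=
  rsum N (fun m => if Rlt_dec 0 (P m) then P m * log2 (/ P m) else 0).

Definition exp_len (N : nat) (P : nat -> R)
  (E : (nat -> R) -> nat -> list bool) : R :=
  rsum N (fun m => P m * INR (length (E P m))).

Definition is_UCS (N : nat) (Delta : R) (L : (nat -> R) -> R)
  (E : (nat -> R) -> nat -> list bool)
  (D : (nat -> R) -> list bool -> nat) : Prop :=
  (forall Q x, (D Q x < N)%nat) /\
  (forall P, is_dist N P -> 0 < L P) /\
  (forall P Q m, is_dist N P -> is_dist N Q -> close N Delta P Q ->
     (m < N)%nat -> D Q (E P m) = m) /\
  (forall P, is_dist N P -> exp_len N P E <= L P).

From Stdlib Require Import Reals List Lia Lra ZArith.
From mathcomp Require all_boot all_algebra finfield.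
Open Scope R_scope.

(* To send m with P m > 0, the sender computes the level k = ceil(log2 (1/P m))
   and sends it in unary.  The points of U that might be confused with m are
   few: if Q i > 2^-k 2^-Delta (the receiver's candidates) then, by
   Delta-closeness, P i > 2^-k 2^(-2 Delta), and by Markov's inequality at most
   2^k 2^(2 Delta) points of U are that heavy under P (the competitors).
   Writing points of U in n = O(log N) bits and reading those bits as the
   coefficients of a polynomial, two distinct points collide at no more than
   n points of a finite field; so in the field with 2^(b+1) elements,
   b = k + O(Delta) + O(log2 log2 N), some x separates m from all its
   competitors.  The sender transmits x and the hash of m at x (2(b+1) bits);
   the receiver returns the unique candidate with that hash.  Points with
   P m = 0 are sent in binary; they do not contribute to the expected length. *)

Module PolyHash.
Import all_boot all_algebra finfield.
Import GRing.Theory.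
Local Open Scope nat_scope.

Definition bit (m i : nat) : bool := odd (m %/ 2 ^ i).

Lemma bits_inj {n m m'} : m < 2 ^ n -> m' < 2 ^ n ->
  (forall i, i < n -> bit m i = bit m' i) -> m = m'.
Proof.
elim: n m m' => [|n IH] m m'.
  by rewrite expn0 !ltnS !leqn0 => /eqP -> /eqP ->.
move=> lt_m lt_m' same_bits.
have same_odd : odd m = odd m'.
  by have := same_bits 0 (ltn0Sn n); rewrite /bit expn0 !divn1.
have same_half : m./2 = m'./2.
  apply: IH; try by rewrite ltn_half_double -mul2n -expnS.
  move=> i lt_in; have := same_bits i.+1 lt_in.
  by rewrite /bit expnS !divnMA !divn2.
by rewrite -(odd_double_half m) -(odd_double_half m') same_odd same_half.
Qed.

Definition phash (F : nzRingType) (x : F) (n m : nat) : F :=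
  (\sum_(i < n) (bit m i)%:R * x ^+ i)%R.
Arguments phash {F}.

Lemma card_roots {F : finIdomainType} {q : {poly F}} :
  q != 0%R -> #|[set x | root q x]| < size q.
Proof.
move=> q_neq0; rewrite cardE; apply: max_poly_roots => //; last exact: enum_uniq.
by apply/allP => x; rewrite mem_enum inE.
Qed.

(* Two distinct n-bit numbers collide under the hash for at most n points:
   the collision points are the roots of the difference polynomial, which
   is nonzero of size at most n. *)
Lemma card_collisions (F : finIdomainType) n a m :
  a < 2 ^ n -> m < 2 ^ n -> a != m ->
  #|[set x : F | phash x n a == phash x n m]| <= n.
Proof.
move=> lt_a lt_m a_neq_m.
pose q : {poly F} := (\poly_(i < n) ((bit a i)%:R - (bit m i)%:R))%R.
have -> : [set x : F | phash x n a == phash x n m] = [set x | root q x].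
  apply/setP => x; rewrite !inE /root horner_poly /phash -subr_eq0 -sumrB.
  by congr (_ == _); apply: eq_bigr => i _; rewrite mulrBl.
have [i bit_neq] : exists i : 'I_n, bit a i != bit m i.
  apply/existsP; apply: contraR a_neq_m => /existsPn same_bits.
  apply/eqP; apply: (bits_inj lt_a lt_m) => i lt_in.
  exact/eqP/negPn/(same_bits (Ordinal lt_in)).
have q_neq0 : q != 0%R.
  apply: contraNneq bit_neq => q_eq0.
  have := congr1 (fun p : {poly F} => p`_i)%R q_eq0.
  rewrite coef_poly ltn_ord coef0 => /eqP; rewrite subr_eq0 => /eqP.
  by case: (bit a i); case: (bit m i) => //= /eqP; rewrite ?oner_eq0 // eq_sym oner_eq0.
exact: ltnW (leq_trans (card_roots q_neq0) (size_poly _ _)).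
Qed.

(* Union bound: m collides with some element of S on at most |S| n points. *)
Lemma card_bad_points (F : finIdomainType) {n} {S : seq nat} {m} :
  m < 2 ^ n -> (forall a, a \in S -> (a < 2 ^ n) && (a != m)) ->
  #|[set x : F | has (fun a => phash x n a == phash x n m) S]| <= size S * n.
Proof.
move=> lt_m; elim: S => [|a S IH] S_ok.
  by rewrite leqn0 cards_eq0; apply/eqP/setP => x; rewrite !inE.
have /andP [lt_a a_neq_m] := S_ok a (mem_head a S).
rewrite (_ : [set x | _] = [set x : F | phash x n a == phash x n m]
           :|: [set x | has (fun a => phash x n a == phash x n m) S]);
  last by apply/setP => x; rewrite !inE.
apply: leq_trans (leq_card_setU _ _) _; rewrite mulSn leq_add //.
  exact: card_collisions.
by apply: IH => a' a'_in; apply: S_ok; rewrite in_cons a'_in orbT.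
Qed.

Lemma separating_point_exists {F : finIdomainType} {n} {S : seq nat} {m} :
  m < 2 ^ n -> (forall a, a \in S -> (a < 2 ^ n) && (a != m)) ->
  size S * n < #|F| ->
  exists x : F, ~~ has (fun a => phash x n a == phash x n m) S.
Proof.
move=> lt_m S_ok small; apply/existsP.
move: (leq_ltn_trans (card_bad_points F lt_m S_ok) small).
apply: contraLR => /existsPn all_bad; rewrite -leqNgt -(cardsT F) subset_leq_card //.
by apply/subsetP => x _; rewrite inE; apply/negPn/all_bad.
Qed.

Definition GF2 (b : nat) : finFieldType :=
  s2val (@pPrimePowerField 2 b.+1 isT (ltn0Sn b)).

Lemma card_GF2 b : #|GF2 b| = 2 ^ b.+1.
Proof. exact: (s2valP' (@pPrimePowerField 2 b.+1 isT (ltn0Sn b))). Qed.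

(* A canonical separating point (0 if there is none). *)
Definition sep_point b n S m : GF2 b :=
  odflt 0%R [pick x : GF2 b | ~~ has (fun a => phash x n a == phash x n m) S].

Lemma sep_point_spec {b n S m} :
  m < 2 ^ n -> (forall a, a \in S -> (a < 2 ^ n) && (a != m)) ->
  size S * n < 2 ^ b.+1 ->
  ~~ has (fun a => phash (sep_point b n S m) n a
                   == phash (sep_point b n S m) n m) S.
Proof.
move=> lt_m S_ok small; rewrite /sep_point; case: pickP => [x //|no_sep].
rewrite -card_GF2 in small.
have [x sep_x] := separating_point_exists lt_m S_ok small.
by have := no_sep x; rewrite sep_x.
Qed.

Fixpoint to_bits (len r : nat) : seq bool :=
  if len is len'.+1 then odd r :: to_bits len' r./2 else [::].

Fixpoint of_bits (s : seq bool) : nat :=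
  if s is c :: s' then c + (of_bits s').*2 else 0.

Lemma to_bitsK len r : r < 2 ^ len -> of_bits (to_bits len r) = r.
Proof.
elim: len r => [|len IH] r /=; first by rewrite expn0 ltnS leqn0 => /eqP ->.
move=> lt_r; rewrite IH ?odd_double_half //.
by rewrite ltn_half_double -mul2n -expnS.
Qed.

Lemma size_to_bits len r : size (to_bits len r) = len.
Proof. by elim: len r => [|len IH] r //=; rewrite IH. Qed.

Definition enc_elt {b} (x : GF2 b) : seq bool :=
  to_bits b.+1 (index x (enum (GF2 b))).

Definition dec_elt b (s : seq bool) : GF2 b := nth 0%R (enum (GF2 b)) (of_bits s).

Lemma enc_eltK b : cancel (@enc_elt b) (dec_elt b).
Proof.
move=> x; rewrite /dec_elt /enc_elt to_bitsK ?nth_index ?mem_enum //.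
by rewrite -card_GF2 cardE index_mem mem_enum.
Qed.

Lemma size_enc_elt b x : size (@enc_elt b x) = b.+1.
Proof. exact: size_to_bits. Qed.

(* The least i < N satisfying p (0 if there is none). *)
Definition first_below N (p : pred nat) : nat :=
  let i := find p (iota 0 N) in if i < N then i else 0.

Lemma first_below_lt N p : 0 < N -> first_below N p < N.
Proof. by move=> N_gt0; rewrite /first_below; case: ifP. Qed.

Lemma first_below_unique N (p : pred nat) m : m < N -> p m ->
  (forall i, i < N -> p i -> i = m) -> first_below N p = m.
Proof.
move=> lt_mN p_m uniq_m.
have has_p : has p (iota 0 N) by apply/hasP; exists m; rewrite ?mem_iota.
have := has_find p (iota 0 N); rewrite has_p size_iota => /esym lt_find.
rewrite /first_below lt_find; apply: uniq_m => //.
by have := nth_find 0 has_p; rewrite nth_iota.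
Qed.

Definition others (p : pred nat) N m : seq nat := [seq i <- iota 0 N | p i && (i != m)].

Definition hash_msg b n (S : seq nat) m : seq bool :=
  let x := sep_point b n S m in enc_elt x ++ enc_elt (phash x n m).

Definition hash_decode b n N (cand : pred nat) (s : seq bool) : nat :=
  let x := dec_elt b (take b.+1 s) in
  let v := dec_elt b (take b.+1 (drop b.+1 s)) in
  first_below N (fun i => cand i && (phash x n i == v)).

Lemma hash_decode_msg b n N (comp cand : pred nat) m tail :
  m < N -> N <= 2 ^ n -> cand m ->
  (forall i, i < N -> cand i -> i != m -> comp i) ->
  size (others comp N m) * n < 2 ^ b.+1 ->
  hash_decode b n N cand (hash_msg b n (others comp N m) m ++ tail) = m.
Proof.
move=> lt_mN le_N cand_m cand_comp small.
rewrite /hash_decode /hash_msg -catA take_size_cat ?size_enc_elt //.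
rewrite drop_size_cat ?take_size_cat ?size_enc_elt // !enc_eltK; set x := sep_point _ _ _ _.
have lt_m : m < 2 ^ n := leq_trans lt_mN le_N.
have S_ok a : a \in others comp N m -> (a < 2 ^ n) && (a != m).
  by rewrite mem_filter mem_iota => /and3P [/andP [_ ->] _ /leq_trans ->].
have /hasPn sep := sep_point_spec lt_m S_ok small.
apply: first_below_unique => //; first by rewrite cand_m eqxx.
move=> i lt_iN /andP [cand_i /eqP hash_eq]; apply/eqP; apply: contraT => i_neq_m.
have i_in : i \in others comp N m.
  by rewrite mem_filter mem_iota add0n lt_iN i_neq_m cand_comp.
by have := sep i i_in; rewrite -/x hash_eq eqxx.
Qed.

Lemma expn_pow m n : m ^ n = Nat.pow m n.
Proof. by elim: n => [|n IH] //=; rewrite expnS IH. Qed.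

Lemma length_size (T : Type) (s : seq T) : List.length s = size s.
Proof. by elim: s => //= _ s ->. Qed.

Lemma to_bitsK_nat len r : (r < Nat.pow 2 len)%coq_nat -> of_bits (to_bits len r) = r.
Proof. by move=> /ltP; rewrite -expn_pow; apply: to_bitsK. Qed.

Lemma length_hash_msg b n S m : List.length (hash_msg b n S m) = (b.+1 + b.+1)%coq_nat.
Proof. by rewrite length_size size_cat !size_enc_elt. Qed.

Lemma hash_decode_lt b n N cand s :
  (0 < N)%coq_nat -> (hash_decode b n N cand s < N)%coq_nat.
Proof. by move=> /ltP N_gt0; apply/ltP; apply: first_below_lt. Qed.

Lemma hash_decode_msg_nat b n N (comp cand : nat -> bool) m tail :
  (m < N)%coq_nat -> (N <= Nat.pow 2 n)%coq_nat -> cand m = true ->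
  (forall i, (i < N)%coq_nat -> cand i = true -> i <> m -> comp i = true) ->
  (size (others comp N m) * n < Nat.pow 2 b.+1)%coq_nat ->
  hash_decode b n N cand (hash_msg b n (others comp N m) m ++ tail) = m.
Proof.
move=> /ltP lt_mN /leP; rewrite -expn_pow => le_N cand_m cand_comp.
rewrite -expn_pow => /ltP small.
apply: hash_decode_msg => // i /ltP lt_iN cand_i /eqP; exact: cand_comp.
Qed.

Lemma size_others_le p N m : (size (others p N m) <= count p (iota 0 N))%coq_nat.
Proof.
by apply/leP; rewrite size_filter; apply: sub_count => i /= /andP [].
Qed.

Lemma count_iota_S (p : nat -> bool) N :
  count p (iota 0 N.+1) = (count p (iota 0 N) + nat_of_bool (p N))%coq_nat.
Proof. by rewrite -addn1 iotaD count_cat /= addn0 plusE. Qed.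
End PolyHash.

Import PolyHash.

Lemma ln2_pos : 0 < ln 2.
Proof. pose proof ln_lt_2; lra. Qed.

Lemma log2_le x y : 0 < x -> x <= y -> log2 x <= log2 y.
Proof.
intros Hx Hxy; unfold log2, Rdiv.
apply Rmult_le_compat_r; [left; apply Rinv_0_lt_compat, ln2_pos|].
destruct (Rle_lt_or_eq_dec x y Hxy) as [Hlt | ->]; [left; apply ln_increasing|]; lra.
Qed.

Lemma log2_pow k : log2 (2 ^ k) = INR k.
Proof. unfold log2; rewrite ln_pow by lra; pose proof ln2_pos; field; lra. Qed.

Lemma log2_mult2 x : 0 < x -> log2 (2 * x) = 1 + log2 x.
Proof. intros Hx; unfold log2; rewrite ln_mult by lra; pose proof ln2_pos; field; lra. Qed.

Lemma Rpower2_log2 x : 0 < x -> Rpower 2 (log2 x) = x.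
Proof.
intros Hx; unfold Rpower, log2.
replace (ln x / ln 2 * ln 2) with (ln x) by (pose proof ln2_pos; field; lra).
apply exp_ln; exact Hx.
Qed.

Lemma log2_nat_le M : (0 < M)%nat -> INR (Nat.log2 M) <= log2 (INR M).
Proof.
intros HM; destruct (Nat.log2_spec M HM) as [Hlow _].
apply le_INR in Hlow; rewrite pow_INR in Hlow.
replace (INR 2) with 2 in Hlow by (simpl; lra).
rewrite <- (log2_pow (Nat.log2 M)); apply log2_le; [apply pow_lt|]; lra.
Qed.

(* Elements of U = {0, ..., N-1} are written with nbits N bits, and
   numbers up to nbits N with lbits N bits, about log2 log2 N. *)
Definition nbits (N : nat) : nat := S (Nat.log2 N).
Definition lbits (N : nat) : nat := S (Nat.log2 (nbits N)).

Lemma nbits_spec N : (0 < N)%nat -> (N <= 2 ^ nbits N)%nat.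
Proof. intros HN; destruct (Nat.log2_spec N HN) as [_ H]; unfold nbits; lia. Qed.

Lemma lbits_spec N : (nbits N < 2 ^ lbits N)%nat.
Proof.
destruct (Nat.log2_spec (nbits N)) as [_ H]; unfold lbits, nbits in *; lia.
Qed.

Lemma log2_log2_ge1 N : (4 <= N)%nat -> 2 <= log2 (INR N) /\ 1 <= log2 (log2 (INR N)).
Proof.
intros HN.
assert (H2 : 2 <= log2 (INR N)).
{ replace 2 with (log2 (2 ^ 2)) at 1 by (rewrite log2_pow; simpl; lra).
  apply le_INR in HN; apply log2_le; simpl in *; lra. }
split; [exact H2|].
replace 1 with (log2 (2 ^ 1)) by (rewrite log2_pow; simpl; lra).
apply log2_le; simpl; lra.
Qed.

(* lbits N <= 2 + log2 log2 N: it is the log of nbits N <= 2 log2 N. *)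
Lemma lbits_bound N : (4 <= N)%nat -> INR (lbits N) <= 2 + log2 (log2 (INR N)).
Proof.
intros HN; destruct (log2_log2_ge1 N HN) as [H2 _].
assert (Hn : INR (nbits N) <= 2 * log2 (INR N)).
{ unfold nbits; rewrite S_INR; pose proof (log2_nat_le N ltac:(lia)); lra. }
assert (Hl : log2 (INR (nbits N)) <= log2 (2 * log2 (INR N))).
{ apply log2_le; [apply lt_0_INR; unfold nbits; lia | exact Hn]. }
rewrite log2_mult2 in Hl by lra.
pose proof (log2_nat_le (nbits N) ltac:(unfold nbits; lia)).
unfold lbits; rewrite S_INR; lra.
Qed.

Lemma rsum_le n f g : (forall i, (i < n)%nat -> f i <= g i) -> rsum n f <= rsum n g.
Proof.
induction n; intros H; simpl; [lra|].
apply Rplus_le_compat; [apply IHn; intros; apply H|apply H]; lia.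
Qed.

Lemma rsum_plus n f g : rsum n (fun i => f i + g i) = rsum n f + rsum n g.
Proof. induction n; simpl; [|rewrite IHn]; lra. Qed.

Lemma rsum_scal n c f : rsum n (fun i => c * f i) = c * rsum n f.
Proof. induction n; simpl; [|rewrite IHn]; lra. Qed.

Lemma rsum_nonneg n f : (forall i, (i < n)%nat -> 0 <= f i) -> 0 <= rsum n f.
Proof.
intros H; apply Rle_trans with (rsum n (fun _ => 0)); [|apply rsum_le; exact H].
clear H; induction n; simpl; lra.
Qed.

Lemma rsum_term n f i : (forall j, (j < n)%nat -> 0 <= f j) -> (i < n)%nat -> f i <= rsum n f.
Proof.
induction n; intros H Hi; [lia|]; simpl.
pose proof (rsum_nonneg n f ltac:(intros; apply H; lia)).
destruct (Nat.eq_dec i n) as [->|Hne]; [lra|].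
pose proof (IHn ltac:(intros; apply H; lia) ltac:(lia)); pose proof (H n ltac:(lia)); lra.
Qed.

Lemma dist_le1 N P m : is_dist N P -> (m < N)%nat -> P m <= 1.
Proof. intros [Hpos Hsum] Hm; rewrite <- Hsum; apply rsum_term; auto. Qed.

Definition Rltb (x y : R) : bool := if Rlt_dec x y then true else false.

Lemma Rltb_true x y : Rltb x y = true <-> x < y.
Proof. unfold Rltb; destruct (Rlt_dec x y); split; easy. Qed.

Definition heavy (c : R) (P : nat -> R) (i : nat) : bool := Rltb 1 (c * P i).

Lemma count_heavy c P n : 0 <= c -> (forall i, (i < n)%nat -> 0 <= P i) ->
  INR (seq.count (heavy c P) (seq.iota 0 n)) <= c * rsum n P.
Proof.
intros Hc; induction n as [|n IH]; intros HP; [simpl; lra|].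
rewrite count_iota_S, plus_INR; simpl rsum.
specialize (IH ltac:(intros; apply HP; lia)); pose proof (HP n ltac:(lia)).
destruct (heavy c P n) eqn:Hheavy; simpl; [apply Rltb_true in Hheavy|]; nra.
Qed.

(* The natural number ceil(y) (more precisely, the least integer > y). *)
Definition ceil_nat (y : R) : nat := Z.to_nat (up y).

Lemma ceil_nat_spec y : 0 <= y -> y < INR (ceil_nat y) <= y + 1.
Proof.
intros Hy; destruct (archimed y) as [Hup Hup1].
assert (Hz : (0 <= up y)%Z) by (apply le_IZR; lra).
unfold ceil_nat; rewrite INR_IZR_INZ, Z2Nat.id by exact Hz; lra.
Qed.

(* The level of a positive probability p is ceil(log2 (1/p)), the length of a
   Shannon codeword: p > 2^-level p. *)
Definition level (p : R) : nat := ceil_nat (log2 (/ p)).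

Lemma log2_inv_nonneg p : 0 < p -> p <= 1 -> 0 <= log2 (/ p).
Proof.
intros Hp Hp1; rewrite <- (log2_pow 0) at 1; apply log2_le; simpl; [lra|].
rewrite <- Rinv_1; apply Rinv_le_contravar; lra.
Qed.

Lemma level_spec p : 0 < p -> p <= 1 ->
  1 < 2 ^ level p * p /\ INR (level p) <= log2 (/ p) + 1.
Proof.
intros Hp Hp1; pose proof (log2_inv_nonneg p Hp Hp1) as Hnn.
destruct (ceil_nat_spec _ Hnn) as [Hlow Hhigh]; split; [|exact Hhigh].
assert (Hinv : / p < 2 ^ level p).
{ rewrite <- (Rpower2_log2 (/ p)) by (apply Rinv_0_lt_compat; exact Hp).
  rewrite <- Rpower_pow by lra; apply Rpower_lt; [lra | exact Hlow]. }
apply Rmult_lt_compat_r with (r := p) in Hinv; [|exact Hp].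
rewrite Rinv_l in Hinv by lra; exact Hinv.
Qed.

(* The slack 2^slack Delta >= 2^(2 Delta) absorbs the distortion between
   sender's and receiver's distributions. *)
Definition slack (Delta : R) : nat := ceil_nat (2 * Delta).

Lemma slack_spec Delta : 0 <= Delta ->
  INR (slack Delta) <= 2 * Delta + 1 /\ Rpower 2 (2 * Delta) <= 2 ^ slack Delta.
Proof.
intros HD; unfold slack; destruct (ceil_nat_spec (2 * Delta) ltac:(lra)) as [Hlow Hhigh].
split; [exact Hhigh|].
rewrite <- Rpower_pow by lra; apply Rle_Rpower; lra.
Qed.

Definition field_bits (N : nat) (Delta : R) (k : nat) : nat :=
  (k + slack Delta + lbits N)%nat.

(* At level k the sender must separate m from its competitors, the points of
   P-mass above 2^-k 2^(-2 Delta); the receiver considers as candidates the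
   points of Q-mass above 2^-k 2^-Delta. *)
Definition competitors N Delta (P : nat -> R) k m : seq.seq nat :=
  others (heavy (2 ^ k * Rpower 2 (2 * Delta)) P) N m.

Definition candidates Delta (Q : nat -> R) k : nat -> bool :=
  heavy (2 ^ k * Rpower 2 Delta) Q.

Definition Enc N Delta (P : nat -> R) (m : nat) : list bool :=
  if Rlt_dec 0 (P m) then
    let k := level (P m) in
    true :: repeat true k ++ false ::
      hash_msg (field_bits N Delta k) (nbits N) (competitors N Delta P k m) m
  else false :: to_bits (nbits N) m.

Fixpoint split_unary (s : list bool) : nat * list bool :=
  match s with
  | true :: r => let (k, rest) := split_unary r in (S k, rest)
  | false :: r => (0%nat, r)
  | nil => (0%nat, nil)
  end.

Lemma split_unary_repeat k r : split_unary (repeat true k ++ false :: r) = (k, r).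
Proof. induction k as [|k IH]; simpl; [|rewrite IH]; reflexivity. Qed.

Definition Dec N Delta (Q : nat -> R) (s : list bool) : nat :=
  match s with
  | true :: r => let (k, rest) := split_unary r in
      hash_decode (field_bits N Delta k) (nbits N) N (candidates Delta Q k) rest
  | false :: r => let v := of_bits r in if Nat.ltb v N then v else 0%nat
  | nil => 0%nat
  end.

Lemma Dec_lt N Delta Q s : (0 < N)%nat -> (Dec N Delta Q s < N)%nat.
Proof.
intros HN; destruct s as [|[|] r]; simpl; [lia | |].
- destruct (split_unary r); apply hash_decode_lt; exact HN.
- destruct (Nat.ltb_spec (of_bits r) N); lia.
Qed.

Lemma Rpower2_double Delta : Rpower 2 (2 * Delta) = Rpower 2 Delta * Rpower 2 Delta.
Proof. rewrite <- Rpower_plus; f_equal; lra. Qed.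

(* The encoded message is a candidate: Q m >= 2^-Delta P m > 2^-k 2^-Delta. *)
Lemma sender_is_candidate N Delta P Q k m : close N Delta P Q -> (m < N)%nat ->
  1 < 2 ^ k * P m -> candidates Delta Q k m = true.
Proof.
intros Hclose Hm Hk; destruct (Hclose m Hm) as [HPQ _]; apply Rltb_true.
pose proof (pow_lt 2 k ltac:(lra)); nra.
Qed.

(* Every candidate is a competitor: Q i > 2^-k 2^-Delta and Q i <= 2^Delta P i
   give P i > 2^-k 2^(-2 Delta). *)
Lemma candidate_is_competitor N Delta P Q k i : close N Delta P Q -> (i < N)%nat ->
  candidates Delta Q k i = true -> heavy (2 ^ k * Rpower 2 (2 * Delta)) P i = true.
Proof.
intros Hclose Hi Hcand; destruct (Hclose i Hi) as [_ HQP].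
apply Rltb_true in Hcand; apply Rltb_true; rewrite Rpower2_double.
pose proof (pow_lt 2 k ltac:(lra)).
assert (Ha : 0 < Rpower 2 Delta) by apply exp_pos.
apply Rlt_le_trans with (1 := Hcand).
replace (2 ^ k * (Rpower 2 Delta * Rpower 2 Delta) * P i)
  with (2 ^ k * Rpower 2 Delta * (Rpower 2 Delta * P i)) by ring.
apply Rmult_le_compat_l; [nra | exact HQP].
Qed.

(* There are at most 2^k 2^(2 Delta) <= 2^(k + slack Delta) competitors, so
   the field at level k is large enough to separate m from all of them. *)
Lemma competitors_fit N Delta P k m : 0 <= Delta -> is_dist N P ->
  (seq.size (competitors N Delta P k m) * nbits N < 2 ^ S (field_bits N Delta k))%nat.
Proof.
intros HD [HPpos HPsum].
assert (Hc : 0 <= 2 ^ k * Rpower 2 (2 * Delta))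
  by (apply Rmult_le_pos; [apply pow_le; lra | left; apply exp_pos]).
pose proof (count_heavy _ P N Hc HPpos) as Hcount; rewrite HPsum, Rmult_1_r in Hcount.
pose proof (size_others_le (heavy (2 ^ k * Rpower 2 (2 * Delta)) P) N m) as Hsize.
destruct (slack_spec Delta HD) as [_ Hslack].
assert (Hfew : (seq.size (competitors N Delta P k m) <= 2 ^ (k + slack Delta))%nat).
{ apply INR_le; rewrite pow_INR, pow_add; replace (INR 2) with 2 by (simpl; lra).
  apply le_INR in Hsize; pose proof (pow_lt 2 k ltac:(lra)).
  unfold competitors; nra. }
pose proof (lbits_spec N).
unfold field_bits; rewrite Nat.pow_succ_r', (Nat.pow_add_r 2 (k + slack Delta)).
assert (0 < 2 ^ (k + slack Delta))%nat by (apply Nat.neq_0_lt_0, Nat.pow_nonzero; lia).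
nia.
Qed.

Lemma Enc_correct N Delta P Q m : (0 < N)%nat -> 0 <= Delta -> is_dist N P ->
  close N Delta P Q -> (m < N)%nat -> Dec N Delta Q (Enc N Delta P m) = m.
Proof.
intros HN HD HP Hclose Hm; unfold Enc.
destruct (Rlt_dec 0 (P m)) as [Hpos | _].
- destruct (level_spec (P m) Hpos (dist_le1 N P m HP Hm)) as [Hlevel _].
  cbn [Dec]; rewrite split_unary_repeat.
  rewrite <- (app_nil_r (hash_msg _ _ _ m)).
  apply hash_decode_msg_nat.
  + exact Hm.
  + exact (nbits_spec N HN).
  + exact (sender_is_candidate N Delta P Q _ m Hclose Hm Hlevel).
  + intros i Hi Hcand _; exact (candidate_is_competitor N Delta P Q _ i Hclose Hi Hcand).
  + exact (competitors_fit N Delta P _ m HD HP).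
- cbn [Dec]; rewrite to_bitsK_nat by (pose proof (nbits_spec N HN); lia).
  destruct (Nat.ltb_spec m N); lia.
Qed.

Lemma Enc_length N Delta P m : (4 <= N)%nat -> 0 <= Delta -> 0 < P m -> P m <= 1 ->
  INR (length (Enc N Delta P m))
    <= 3 * log2 (/ P m) + 4 * Delta + 15 * log2 (log2 (INR N)).
Proof.
intros HN HD Hpos Hle1; unfold Enc.
destruct (Rlt_dec 0 (P m)) as [_ | Hzero]; [|contradiction].
destruct (level_spec (P m) Hpos Hle1) as [_ Hlevel].
destruct (slack_spec Delta HD) as [Hslack _].
pose proof (lbits_bound N HN); destruct (log2_log2_ge1 N HN) as [_ HLL].
cbn [length]; rewrite length_app, repeat_length; cbn [length].
rewrite length_hash_msg; unfold field_bits.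
repeat rewrite S_INR || rewrite plus_INR.
lra.
Qed.

Lemma entropy_nonneg N P : is_dist N P -> 0 <= entropy N P.
Proof.
intros HP; apply rsum_nonneg; intros i Hi.
destruct (Rlt_dec 0 (P i)) as [Hpos | _]; [|lra].
pose proof (log2_inv_nonneg (P i) Hpos (dist_le1 N P i HP Hi)); nra.
Qed.

(* Averaging the codeword lengths: the expected length is at most
   3 H(P) + 4 Delta + 15 log2 log2 N; points of mass 0 contribute nothing. *)
Lemma exp_len_bound N Delta P : (4 <= N)%nat -> 0 <= Delta -> is_dist N P ->
  exp_len N P (Enc N Delta)
    <= 3 * entropy N P + (4 * Delta + 15 * log2 (log2 (INR N))).
Proof.
intros HN HD HP; set (c := 4 * Delta + 15 * log2 (log2 (INR N))).
replace (3 * entropy N P + c) with (3 * entropy N P + c * rsum N P)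
  by (rewrite (proj2 HP); ring).
unfold entropy, exp_len; rewrite <- rsum_scal, <- rsum_scal, <- rsum_plus.
apply rsum_le; intros m Hm.
destruct (Rlt_dec 0 (P m)) as [Hpos | Hzero].
- pose proof (Enc_length N Delta P m HN HD Hpos (dist_le1 N P m HP Hm)).
  unfold c; nra.
- assert (P m = 0) as -> by (pose proof (proj1 HP m Hm); lra).
  rewrite Rmult_0_l, Rmult_0_r; lra.
Qed.

Theorem theorem1 :
  exists C : R, forall (N : nat) (Delta : R), (4 <= N)%nat -> 0 <= Delta ->
    exists (E : (nat -> R) -> nat -> list bool)
           (D : (nat -> R) -> list bool -> nat)
           (L : (nat -> R) -> R),
      is_UCS N Delta L E D /\
      forall P, is_dist N P ->
        L P <= C * (entropy N P + Delta + log2 (log2 (INR N))).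
Proof.
exists 15; intros N Delta HN HD.
exists (Enc N Delta), (Dec N Delta),
  (fun P => 3 * entropy N P + (4 * Delta + 15 * log2 (log2 (INR N)))).
destruct (log2_log2_ge1 N HN) as [_ HLL].
split; [repeat split|].
- intros Q s; apply Dec_lt; lia.
- intros P HP; pose proof (entropy_nonneg N P HP); lra.
- intros P Q m HP _ Hclose Hm; apply Enc_correct; auto; lia.
- intros P HP; apply exp_len_bound; assumption.
- intros P HP; pose proof (entropy_nonneg N P HP); lra.
Qed.
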